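(* Let $q$ be a prime power and let $f(T)\in\mathbb{F}_q[T]$ be a monic polynomial of degree $d$ such that $D^2f\neq 0$, $\deg f'\ge 1$, and the polynomials $\widetilde{f}(x,y)-f'(x)$ and $\widetilde{f'}(x,y)$ have no common factor other than possibly a power of $x-y$. Then for all but at most $d^2-2d$ values of $s\in\overline{\mathbb{F}_q}$, there exists $b\in\overline{\mathbb{F}_q}$ such that the polynomial $f(T)+sT+b$ has, over $\overline{\mathbb{F}_q}$, exactly one root of multiplicity $2$ and $d-2$ simple roots (and no other roots).
   Context: $\widetilde{f}(x,y)$ is defined by $f(x)-f(y)=(x-y)\widetilde{f}(x,y)$ (and similarly $\widetilde{f'}$ for the derivative $f'$). The $j$-th Hasse derivative of $f=\sum_i a_iT^i$ is $D^jf=\sum_i\binom{i}{j}a_iT^{i-j}$. *)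

From HB Require Import structures.
From mathcomp Require Import all_boot all_order all_algebra all_field.
Set Implicit Arguments. Unset Strict Implicit. Unset Printing Implicit Defensive.
Import GRing.Theory.
Local Open Scope ring_scope.

(* Bivariate polynomials in x, y over R are represented as {poly {poly R}}:
   the inner variable is x, the outer variable is y.  A polynomial p(x) in x
   alone is the constant (in y) polynomial p%:P. *)

(* The divided difference  p~(x,y)  with  p(x) - p(y) = (x - y) p~(x,y).
   For p = sum_i a_i T^i,  p~(x,y) = sum_i a_i sum_{j<i} x^j y^(i-1-j). *)
Definition divdiff (R : nzRingType) (p : {poly R}) : {poly {poly R}} :=
  \sum_(i < size p)
     (p`_i)%:P%:P * \sum_(j < i) ((('X^j : {poly R})%:P) * 'X^(i.-1 - j)).

Definition xmy (R : nzRingType) : {poly {poly R}} := ('X : {poly R})%:P - 'X.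

(* Divisibility in the ring R[x,y] (genuine ring divisibility). *)
Definition bdvd (R : nzRingType) (g h : {poly {poly R}}) : Prop :=
  exists r : {poly {poly R}}, h = r * g.

Definition only_xmy_common (F : fieldType) (A B : {poly {poly F}}) : Prop :=
  forall g : {poly {poly F}}, bdvd g A -> bdvd g B ->
    exists (c : F) (k : nat), c != 0 /\ g = c%:P%:P * (xmy F) ^+ k.

From HB Require Import structures.
From mathcomp Require Import all_boot all_order all_algebra all_field.
From mathcomp Require Import perm zify ring.
From Stdlib Require Import Classical.
Import GRing.Theory.
Local Open Scope ring_scope.

Set Implicit Arguments. Unset Strict Implicit. Unset Printing Implicit Defensive.

(* Substituting y = x + w turns f~(x,y) - f'(x) into w U(x,w) and f'~(x,y) into
   V(x,w), where U = sum_i D^(i+2)f(x) w^i and V = sum_i D^(i+1)f'(x) w^i are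
   Taylor tails.  A common factor of U and V of positive w-degree would give, by
   Gauss's lemma, a common factor other than a power of x - y (U(x,0) = D^2 f(x)
   is nonzero), so the w-resultant R(x) of U and V is nonzero, of degree at most
   (d-2)^2.  Given s, take r with f'(r) = -s and b making f + sT + b vanish at r:
   r is then a root of multiplicity exactly 2 as soon as D^2 f(r) != 0, and a
   second multiple root a makes w = a - r a common root of U(r,.) and V(r,.),
   hence R(r) = 0.  The exceptional s are thus among the -f'(r) with
   R(r) D^2 f(r) = 0: at most (d-2)^2 + (d-2) <= d^2 - 2d values. *)

Definition deg_atmost (R : nzRingType) (q : {poly R}) (W : int) :=
  q = 0 \/ ((size q)%:Z <= W + 1)%R.

Lemma deg_atmost_trans (R : nzRingType) (q : {poly R}) W1 W2 :
  (W1 <= W2)%R -> deg_atmost q W1 -> deg_atmost q W2.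
Proof. by move=> h [->|hq]; [left | right; lia]. Qed.

Lemma deg_atmost_add (R : nzRingType) (p q : {poly R}) W :
  deg_atmost p W -> deg_atmost q W -> deg_atmost (p + q) W.
Proof.
move=> [->|hp] [->|hq]; rewrite ?add0r ?addr0; try by [left | right].
by right; have := size_polyD p q; lia.
Qed.

Lemma deg_atmost_mul (R : idomainType) (p q : {poly R}) W1 W2 :
  deg_atmost p W1 -> deg_atmost q W2 -> deg_atmost (p * q) (W1 + W2).
Proof.
have [->|p0] := eqVneq p 0; first by left; rewrite mul0r.
have [->|q0] := eqVneq q 0; first by left; rewrite mulr0.
move=> [/eqP|hp]; first by rewrite (negPf p0).
move=> [/eqP|hq]; first by rewrite (negPf q0).
have hp0 : (0 < size p)%N by rewrite size_poly_gt0.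
have hq0 : (0 < size q)%N by rewrite size_poly_gt0.
right; rewrite size_mul // -subn1; clear p0 q0.
set sp := size p in hp hp0 *; set sq := size q in hq hq0 *; lia.
Qed.

Lemma deg_atmost_sum (R : nzRingType) (I : Type) (r : seq I) (P : pred I)
    (F : I -> {poly R}) W :
  (forall i, P i -> deg_atmost (F i) W) -> deg_atmost (\sum_(i <- r | P i) F i) W.
Proof.
move=> h; apply: (big_ind (fun q => deg_atmost q W)) => //; first by left.
by move=> x y; apply: deg_atmost_add.
Qed.

Lemma deg_atmost_prod (R : idomainType) (I : Type) (r : seq I) (F : I -> {poly R})
    (W : I -> int) :
  (forall i, deg_atmost (F i) (W i)) ->
  deg_atmost (\prod_(i <- r) F i) (\sum_(i <- r) W i).
Proof.
move=> h; elim: r => [|i r IH]; first by rewrite !big_nil; right; rewrite size_poly1.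
by rewrite !big_cons; apply: deg_atmost_mul.
Qed.

Lemma deg_atmost_signr (R : nzRingType) (q : {poly R}) (b : bool) W :
  deg_atmost q W -> deg_atmost ((-1) ^+ b * q) W.
Proof.
case: b; rewrite ?expr0 ?mul1r // expr1 mulN1r.
by move=> [->|h]; [left; rewrite oppr0 | right; rewrite size_polyN].
Qed.

Lemma deg_atmost_det (R : idomainType) n (M : 'M[{poly R}]_n) (a b : 'I_n -> int) :
  (forall i j, deg_atmost (M i j) (a i + b j)) ->
  deg_atmost (\det M) (\sum_i a i + \sum_j b j).
Proof.
move=> hM; apply: deg_atmost_sum => s _; apply: deg_atmost_signr.
have -> : \sum_i a i + \sum_j b j = \sum_i (a i + b ((s : 'S_n) i)).
  by rewrite big_split /=; congr (_ + _); rewrite (reindex_inj (@perm_inj _ s)).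
exact: deg_atmost_prod.
Qed.

Lemma deg_atmost_resultant (R : idomainType) (p q : {poly {poly R}}) (m n : nat) :
  (forall i, deg_atmost p`_i (m%:Z - i%:Z)) ->
  (forall i, deg_atmost q`_i (n%:Z - i%:Z)) ->
  ((size p).-1 <= m)%N -> ((size q).-1 <= n)%N ->
  deg_atmost (resultant p q) (m * n)%N.
Proof.
move=> hp hq hm hn; set nu := (size p).-1 in hm; set nv := (size q).-1 in hn.
pose a (i : 'I_(nv + nu)) : int :=
  if (i < nv)%N then m%:Z + i%:Z else n%:Z + i%:Z - nv%:Z.
pose b (j : 'I_(nv + nu)) : int := - j%:Z.
(* Entry (i, j) is a coefficient of index j - i of p (of index j - i + nv of q
   in the lower block), which is what these row and column weights bound. *)
apply: deg_atmost_trans (deg_atmost_det (a := a) (b := b) _); last first.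
  move=> i j; rewrite Sylvester_mxE /a /b.
  case: splitP => k ->; (case: (leqP k j) => kj; last by left; rewrite mulr0n);
    rewrite mulr1n /=; [apply: deg_atmost_trans (hp _) | apply: deg_atmost_trans (hq _)];
    move: kj; move: (nat_of_ord j) (nat_of_ord k) => x y; lia.
rewrite -big_split /= big_split_ord /=.
have -> : \sum_(i < nv) (a (lshift nu i) + b (lshift nu i)) = \sum_(i < nv) m%:Z.
  by apply: eq_bigr => i _; rewrite /a /b /= ltn_ord; lia.
have -> : \sum_(i < nu) (a (rshift nv i) + b (rshift nv i)) =
          \sum_(i < nu) (n%:Z - nv%:Z).
  by apply: eq_bigr => i _; rewrite /a /b /= ltnNge leq_addr /=; lia.
rewrite !sumr_const !card_ord; nia.
Qed.

Lemma size_nderivn (R : nzRingType) (p : {poly R}) n : (size p^`N(n) <= size p - n)%N.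
Proof.
apply/leq_sizeP => j hj; rewrite coef_nderivn nth_default ?mul0rn //.
by move: hj; set z := size p; lia.
Qed.

Lemma nderivn_top (R : nzRingType) (p : {poly R}) : p^`N((size p).-1) = (lead_coef p)%:P.
Proof.
apply/polyP => i; rewrite coef_nderivn coefC; case: i => [|i] /=.
  by rewrite addn0 binn mulr1n.
by rewrite nth_default ?mul0rn //; set z := size p; lia.
Qed.

Section TaylorTail.
Variable K : comNzRingType.
Implicit Types (p : {poly K}) (c w : K).

Lemma comp_XaddC_taylor p c :
  p \Po ('X + c%:P) = \sum_(i < size p) (p^`N(i)).[c] *: 'X^i.
Proof.
rewrite /comp_poly addrC nderiv_taylor; last exact: mulrC.
rewrite size_map_polyC; apply: eq_bigr => i _.
by rewrite nderivn_map horner_map /= mul_polyC.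
Qed.

Definition taylor_tail k p c : {poly K} := \poly_(i < size p - k) (p^`N(i + k)).[c].

Lemma comp_XaddC_taylor_tail k p c : (k <= size p)%N ->
  p \Po ('X + c%:P) = \sum_(i < k) (p^`N(i)).[c] *: 'X^i + 'X^k * taylor_tail k p c.
Proof.
move=> hk; rewrite comp_XaddC_taylor -!(big_mkord xpredT (fun i => (p^`N(i)).[c] *: 'X^i)).
rewrite (big_cat_nat (leq0n k) hk) /=; congr (_ + _).
rewrite -{1}[k]add0n big_addn big_mkord /taylor_tail poly_def big_distrr.
apply: eq_bigr => i _ /=.
by rewrite -scalerAr -exprD addnC.
Qed.

Lemma horner_taylor_tail k p c w : (k <= size p)%N ->
  p.[c + w] = \sum_(i < k) (p^`N(i)).[c] * w ^+ i + w ^+ k * (taylor_tail k p c).[w].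
Proof.
move=> hk; have := congr1 (horner^~ w) (comp_XaddC_taylor_tail c hk).
rewrite horner_comp hornerD hornerX hornerC addrC => ->.
rewrite hornerD hornerM hornerXn horner_sum; congr (_ + _).
by apply: eq_bigr => i _; rewrite hornerZ hornerXn.
Qed.

Lemma horner0_taylor_tail k p c : (k < size p)%N -> (taylor_tail k p c).[0] = (p^`N(k)).[c].
Proof. by move=> hk; rewrite horner_coef0 coef_poly subn_gt0 hk. Qed.

Lemma double_root_factor p c : (2 <= size p)%N -> p.[c] = 0 -> p^`().[c] = 0 ->
  p = ('X - c%:P) ^+ 2 * (taylor_tail 2 p c \Po ('X - c%:P)).
Proof.
move=> hs pc dpc; rewrite -{1}(comp_polyXaddC_K p c) (comp_XaddC_taylor_tail c hs).
rewrite !big_ord_recl big_ord0 /= nderivn0 nderivn1 pc dpc !scale0r !add0r.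
by rewrite rmorphM rmorphXn /= comp_polyX.
Qed.

Lemma double_root_deriv p W c : p = ('X - c%:P) ^+ 2 * W -> p.[c] = 0 /\ p^`().[c] = 0.
Proof. by move=> ->; rewrite expr2 !derivM derivXsubC !hornerE /= subrr; split; ring. Qed.

End TaylorTail.

Lemma taylor_tail_root (K : idomainType) k (p : {poly K}) c w : w != 0 -> (k <= size p)%N ->
  p.[c + w] = \sum_(i < k) (p^`N(i)).[c] * w ^+ i -> root (taylor_tail k p c) w.
Proof.
move=> w0 hk; rewrite (horner_taylor_tail _ _ hk) -[RHS]addr0 => /addrI /eqP.
by rewrite mulf_eq0 expf_eq0 (negPf w0) andbF.
Qed.

Lemma lead_coef_taylor_tail (K : comNzRingType) k (p : {poly K}) c : (k < size p)%N ->
  lead_coef (taylor_tail k p c) = lead_coef p.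
Proof.
move=> hk; have top : ((size p - k).-1 + k = (size p).-1)%N by lia.
have p0 : lead_coef p != 0 by rewrite lead_coef_eq0 -size_poly_gt0 (leq_ltn_trans _ hk).
by rewrite lead_coef_poly ?subn_gt0 // top nderivn_top hornerC.
Qed.

Section ShiftedDivdiff.
Variable R : idomainType.
Implicit Type p : {poly R}.
Local Notation shiftXY := ('X + ('X : {poly R})%:P : {poly {poly R}}).

(* Composing with shiftXY substitutes y := x + y (x being 'X%:P), so x - y
   becomes - 'X, and taylor_tail k p^:P 'X is the Taylor tail of p at x. *)

Lemma horner_map_polyC_X p n : ((p^:P)^`N(n)).['X] = p^`N(n).
Proof. by rewrite nderivn_map; exact: comp_polyXr. Qed.

Lemma xmy_mul_divdiff p : xmy R * divdiff p = p%:P - p^:P.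
Proof.
have -> : p%:P = \sum_(i < size p) (p`_i)%:P%:P * ('X^i)%:P.
  rewrite -{1}[p]coefK poly_def rmorph_sum; apply: eq_bigr => i _.
  by rewrite -mul_polyC rmorphM.
have -> : p^:P = \sum_(i < size p) (p`_i)%:P%:P * 'X^i.
  rewrite -{1}[p]coefK poly_def rmorph_sum /=; apply: eq_bigr => i _.
  by rewrite map_polyZ map_polyXn mul_polyC.
rewrite -sumrB /divdiff big_distrr; apply: eq_bigr => i _ /=.
rewrite -mulrBr mulrCA; congr (_ * _).
rewrite /xmy -[_ - 'X]opprB mulNr rmorphXn /= -[_ - 'X^i]opprB subrXX.
by congr (- (_ * _)); apply: eq_bigr => j _; rewrite rmorphXn mulrC.
Qed.

Lemma mulNX_divdiff_shift p : - 'X * (divdiff p \Po shiftXY) = p%:P - (p^:P \Po shiftXY).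
Proof.
have <- : xmy R \Po shiftXY = - 'X.
  by rewrite /xmy comp_polyB comp_polyC comp_polyX opprD addrCA subrr addr0.
by rewrite -comp_polyM xmy_mul_divdiff comp_polyB comp_polyC.
Qed.

Lemma divdiff_shift p : (0 < size p)%N -> divdiff p \Po shiftXY = taylor_tail 1 p^:P 'X.
Proof.
move=> hs; apply: (@mulfI _ (- 'X)); first by rewrite oppr_eq0 polyX_eq0.
rewrite mulNX_divdiff_shift (comp_XaddC_taylor_tail _ (k := 1)) ?size_map_polyC //.
by rewrite big_ord1 horner_map_polyC_X nderivn0 expr0 alg_polyC expr1; ring.
Qed.

Lemma divdiff_sub_deriv_shift p : (1 < size p)%N ->
  (divdiff p - (p^`())%:P) \Po shiftXY = 'X * taylor_tail 2 p^:P 'X.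
Proof.
move=> hs; apply: (@mulfI _ (- 'X)); first by rewrite oppr_eq0 polyX_eq0.
rewrite comp_polyB comp_polyC mulrBr mulNX_divdiff_shift.
rewrite (comp_XaddC_taylor_tail _ (k := 2)) ?size_map_polyC //.
rewrite !big_ord_recl big_ord0 /= !horner_map_polyC_X nderivn0 nderivn1.
by rewrite expr0 alg_polyC expr1 -mul_polyC; ring.
Qed.

End ShiftedDivdiff.

Lemma deg_atmost_coef_taylor_tail (R : idomainType) k (p : {poly R}) i :
  deg_atmost (taylor_tail k p^:P 'X)`_i ((size p).-1%:Z - k%:Z - i%:Z).
Proof.
rewrite coef_poly size_map_polyC; case: ltnP => hi; last by left.
right; rewrite horner_map_polyC_X; have := size_nderivn p (i + k).
by set z := size p in hi *; set y := size _; lia.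
Qed.

Definition comm_iota (F L : fieldType) (iota : {rmorphism F -> L}) (a : L) :
  commr_rmorph iota a := fun _ => mulrC _ _.

Notation eval_at iota a := (horner_morph (comm_iota iota a)).

Lemma map_taylor_tail_polyCX (F : fieldType) (L : fieldType) (iota : {rmorphism F -> L})
    k (p : {poly F}) (r : L) :
  map_poly (eval_at iota r) (taylor_tail k p^:P 'X) = taylor_tail k (map_poly iota p) r.
Proof.
apply/polyP => i; rewrite coef_map !coef_poly size_map_polyC size_map_poly.
by case: ltnP => _; rewrite ?raddf0 // (horner_map_polyC_X p) nderivn_map.
Qed.

Lemma rmorph_resultant_common_root (R : nzRingType) (K : fieldType)
    (phi : {rmorphism {poly R} -> K}) (p q : {poly {poly R}}) (w : K) :
  phi (lead_coef p) != 0 -> phi (lead_coef q) != 0 ->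
  root (map_poly phi p) w -> root (map_poly phi q) w -> phi (resultant p q) = 0.
Proof.
move=> lp lq pw qw; rewrite map_resultant //; apply/eqP; rewrite resultant_eq0.
have p0 : map_poly phi p != 0.
  by rewrite -lead_coef_eq0 lead_coef_map_id0 ?rmorph0.
have wdvd : ('X - w%:P) %| gcdp (map_poly phi p) (map_poly phi q).
  by rewrite dvdp_gcd !dvdp_XsubCl pw qw.
have := dvdp_leq _ wdvd; rewrite size_XsubC; apply.
by rewrite gcdp_eq0 negb_and p0.
Qed.

Section GaussLemma.
Variables (F : fieldType) (L : closedFieldType) (iota : {rmorphism F -> L}).

Lemma eval_kernel_generator (a : L) (c : {poly F}) : c != 0 -> eval_at iota a c = 0 ->
  exists p, [/\ p != 0, eval_at iota a p = 0 &
    forall t, eval_at iota a t = 0 -> p %| t].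
Proof.
elim: {c}(size c) {-2}c (leqnn (size c)) => [|n IH] c hs c0 ca.
  by move: c0; rewrite -size_poly_eq0 -leqn0 hs.
case: (classic (forall t, eval_at iota a t = 0 -> c %| t)) => [gen|].
  by exists c.
move=> /not_all_ex_not [t tc].
have ta := not_imply_elim _ _ tc; have ct := not_imply_elim2 _ _ tc.
have tc0 : t %% c != 0 by apply/negP => /eqP/modp_eq0P.
apply: (IH (t %% c)) => //; first by rewrite -ltnS (leq_trans _ hs) // ltn_modp.
by move: (divp_eq t c) => /(congr1 (eval_at iota a)); rewrite rmorphD rmorphM /= ca mulr0 add0r ta.
Qed.

Definition primitive_coefs (g : {poly {poly F}}) :=
  forall t : {poly F}, (forall i, t %| g`_i) -> (size t <= 1)%N.

Lemma polyC_mul_divcoefs (t : {poly F}) (g : {poly {poly F}}) : t != 0 ->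
  (forall i, t %| g`_i) -> g = t%:P * \poly_(i < size g) (g`_i %/ t).
Proof.
move=> t0 tg; apply/polyP => i; rewrite coefCM coef_poly.
by case: ltnP => hi; [rewrite mulrC divpK | rewrite mulr0 nth_default].
Qed.

Lemma size_gt1_eval_root (p : {poly F}) (a : L) : p != 0 -> eval_at iota a p = 0 ->
  (1 < size p)%N.
Proof.
move=> p0 pa; rewrite -(size_map_poly iota); apply: (@root_size_gt1 _ a).
  by rewrite map_poly_eq0.
exact/eqP.
Qed.

(* Gauss's lemma: an induction on the size of c, dividing out at each step the
   generator of the kernel of evaluation at a root of c, which divides every
   coefficient of q because g, being primitive, does not vanish there. *)
Lemma primitive_dvdp_scale (g : {poly {poly F}}) (c : {poly F}) (p q : {poly {poly F}}) :
  primitive_coefs g -> c != 0 -> c *: p = q * g -> bdvd g p.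
Proof.
move=> gprim; elim: {c}(size c) {-2}c (leqnn (size c)) q => [|n IH] c hs q c0 e.
  by move: c0; rewrite -size_poly_eq0 -leqn0 hs.
have [c1|c1] := leqP (size c) 1.
  have /size_poly1P [k k0 ck] : size c == 1%N by rewrite eqn_leq c1 lt0n size_poly_eq0.
  exists ((k^-1)%:P%:P * q); rewrite -mulrA -e -mul_polyC mulrA -rmorphM ck.
  by rewrite -rmorphM mulVf // !rmorph1 mul1r.
have [a ca] : exists a, eval_at iota a c = 0.
  have /closed_rootP [a /rootP ca] : size (map_poly iota c) != 1%N.
    by rewrite size_map_poly neq_ltn c1 orbT.
  by exists a.
have [p0 [p00 p0a p0gen]] := eval_kernel_generator c0 ca.
have /eqP := congr1 (map_poly (eval_at iota a)) e.
rewrite -mul_polyC !rmorphM /= map_polyC /= ca mul0r eq_sym mulf_eq0.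
have p0coef (h : {poly {poly F}}) : map_poly (eval_at iota a) h = 0 -> forall i, p0 %| h`_i.
  by move=> hz i; apply: p0gen; rewrite -coef_map hz coef0.
case/orP => /eqP h; last first.
  by have := gprim _ (p0coef _ h); rewrite leqNgt (size_gt1_eval_root p00 p0a).
have eq := polyC_mul_divcoefs p00 (p0coef _ h).
have p0c : p0 %| c by exact: p0gen.
set c' := c %/ p0.
have ec : c = c' * p0 by rewrite divpK.
have c'0 : c' != 0 by apply: contraNneq c0 => h0; rewrite ec h0 mul0r.
apply: (IH c' _ (\poly_(i < size q) (q`_i %/ p0))) => //.
  have := size_gt1_eval_root p00 p0a; move: hs; rewrite ec size_mul //.
  by set x := size c'; set y := size p0; lia.
apply: (@mulfI _ p0%:P); first by rewrite polyC_eq0.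
by rewrite mulrA -eq -e ec -!mul_polyC mulrA -rmorphM [p0 * _]mulrC.
Qed.

Lemma primitive_factor (G : {poly {poly F}}) : G != 0 ->
  exists t g, [/\ G = t%:P * g, size g = size G & primitive_coefs g].
Proof.
elim: {G}(size (lead_coef G)) {-2}G (leqnn (size (lead_coef G))) => [|n IH] G hs G0.
  by move: G0; rewrite -lead_coef_eq0 -size_poly_eq0 -leqn0 hs.
case: (classic (primitive_coefs G)) => [Gprim|]; first by exists 1, G; rewrite mul1r.
move=> /not_all_ex_not [t tG]; have tdvd := not_imply_elim _ _ tG.
have t1 : (1 < size t)%N by rewrite ltnNge; apply/negP => /(not_imply_elim2 _ _ tG).
have t0 : t != 0 by rewrite -size_poly_eq0 -lt0n ltnW.
have eG := polyC_mul_divcoefs t0 tdvd; set G' := \poly_(i < _) _ in eG.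
have G'0 : G' != 0 by apply: contraNneq G0 => h; rewrite eG h mulr0.
have [|t' [g [eG' sg gprim]]] := IH G' _ G'0.
  have := size_poly_gt0 (lead_coef G'); rewrite lead_coef_eq0 G'0 => lG'.
  move: hs; rewrite eG lead_coefM lead_coefC size_mul ?lead_coef_eq0 //.
  by set x := size t in t1 *; set y := size _ in lG' *; lia.
exists (t * t'), g; split => //; first by rewrite eG eG' mulrA -rmorphM.
by rewrite sg eG size_Cmul.
Qed.

Lemma resultant_eq0_common_factor (U V : {poly {poly F}}) : resultant U V = 0 ->
  exists g : {poly {poly F}}, [/\ (1 < size g)%N, bdvd g U & bdvd g V].
Proof.
move=> /eqP; rewrite resultant_eq0; set G := gcdp U V => G1.
have G0 : G != 0 by rewrite -size_poly_eq0 -lt0n ltnW.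
have [t [g [eG sg gprim]]] := primitive_factor G0.
have dvd_g p : G %| p -> bdvd g p.
  case/Pdiv.Idomain.dvdpP => [[c q] /= c0 e].
  by apply: primitive_dvdp_scale gprim c0 _; rewrite e eG mulrA.
by exists g; split; [rewrite sg | apply/dvd_g/dvdp_gcdl | apply/dvd_g/dvdp_gcdr].
Qed.

End GaussLemma.

Lemma not_uniq_perm (T : eqType) (s : seq T) : ~~ uniq s ->
  exists a t, perm_eq s (a :: a :: t).
Proof.
elim: s => [|x s IH] //=; rewrite negb_and negbK => /orP [xs|/IH [a [t st]]].
  by exists x, (rem x s); rewrite perm_cons perm_to_rem.
exists a, (x :: t); rewrite -(perm_cons x) in st; apply: perm_trans st _.
by rewrite -[x :: _]/([:: x] ++ [:: a; a] ++ t) perm_catCA.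
Qed.

Lemma uniq_double_root (K : fieldType) (r : K) (rs : seq K) : r \notin rs ->
  (forall a (W : {poly K}),
     ('X - r%:P) ^+ 2 * \prod_(x <- rs) ('X - x%:P) = ('X - a%:P) ^+ 2 * W -> a = r) ->
  uniq (r :: rs).
Proof.
move=> rrs double_r /=; rewrite rrs /=; apply/negPn/negP => /not_uniq_perm [a [t rst]].
have ars : a \in rs by rewrite (perm_mem rst) mem_head.
suff ar : a = r by rewrite -ar ars in rrs.
apply: (double_r a (('X - r%:P) ^+ 2 * \prod_(x <- t) ('X - x%:P))).
by rewrite (perm_big _ rst) /= !big_cons; ring.
Qed.

Lemma size_linear_poly (R : nzRingType) (s b : R) : (size (s *: 'X + b%:P)%R <= 2)%N.
Proof.
apply: leq_trans (size_polyD _ _) _; rewrite geq_max size_polyC.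
apply/andP; split; last by case: (b != 0).
by apply: leq_trans (size_scale_leq _ _) _; rewrite size_polyX.
Qed.

Lemma roots_in_seq (F : fieldType) (L : closedFieldType) (iota : {rmorphism F -> L})
    (p : {poly F}) : p != 0 ->
  exists rs : seq L, size rs = (size p).-1 /\ forall x, root (map_poly iota p) x -> x \in rs.
Proof.
move=> p0; have [rs ers] := closed_field_poly_normal (map_poly iota p).
have l0 : lead_coef (map_poly iota p) != 0 by rewrite lead_coef_eq0 map_poly_eq0.
exists rs; split.
  have := congr1 (fun q : {poly L} => size q) ers.
  by rewrite size_map_poly size_scale // size_prod_XsubC => ->.
by move=> x; rewrite ers rootZ // root_prod_XsubC.
Qed.

Lemma closed_field_poly_surj (K : closedFieldType) (p : {poly K}) (c : K) :
  (1 < size p)%N -> exists x, p.[x] = c.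
Proof.
move=> p1; have /closed_rootP [x /rootP]: size (p - c%:P) != 1%N.
  rewrite size_polyDl ?neq_ltn ?p1 ?orbT //.
  by rewrite size_polyN size_polyC (leq_ltn_trans (leq_b1 _) p1).
by move=> px; exists x; apply/eqP; rewrite -subr_eq0 -px !hornerE.
Qed.

Section TangentLines.
Variables (F : fieldType) (L : closedFieldType) (iota : {rmorphism F -> L}).
Variables (f : {poly F}) (d : nat).
Hypothesis f_size : size f = d.+1.
Hypothesis df_size : (1 < size f^`())%N.

Local Notation U := (taylor_tail 2 f^:P 'X).
Local Notation V := (taylor_tail 1 (f^`())^:P 'X).
Local Notation fL := (map_poly iota f).
Local Notation dfL := (map_poly iota f^`()).

Lemma size_gt2 : (2 < size f)%N.
Proof.
have f0 : f != 0 by apply: contraTneq df_size => ->; rewrite deriv0 size_poly0.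
exact: leq_ltn_trans df_size (lt_size_deriv f0).
Qed.

Lemma resultant_taylor_tails_neq0 : f^`N(2) != 0 ->
  only_xmy_common (divdiff f - (f^`())%:P) (divdiff f^`()) -> resultant U V != 0.
Proof.
move=> D2f hcop; apply/eqP => /(resultant_eq0_common_factor iota) [g [g1 [r1 eU] [r2 eV]]].
pose x : {poly F} := 'X.
have unshiftK q : (q \Po ('X - x%:P)) \Po ('X + x%:P) = q.
  by have := comp_polyXaddC_K q (- x); rewrite polyCN opprK.
have dvdA : bdvd (g \Po ('X - x%:P)) (divdiff f - (f^`())%:P).
  exists (('X * r1) \Po ('X - x%:P)).
  by rewrite -comp_polyM -mulrA -eU -divdiff_sub_deriv_shift ?comp_polyXaddC_K // ltnW // size_gt2.
have dvdB : bdvd (g \Po ('X - x%:P)) (divdiff f^`()).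
  exists (r2 \Po ('X - x%:P)).
  by rewrite -comp_polyM -eV -divdiff_shift ?comp_polyXaddC_K // (ltnW df_size).
have [c [k [c0 eg]]] := hcop _ dvdA dvdB.
have {}eg : g = c%:P%:P * (- 'X) ^+ k.
  rewrite -[g]unshiftK eg comp_polyM comp_polyC rmorphXn /= /xmy comp_polyB comp_polyC.
  by rewrite comp_polyX opprD addrCA subrr addr0.
case: k eg => [|k] eg.
  by move: g1; rewrite eg expr0 mulr1 size_polyC; case: (_ != 0).
have : U`_0 = 0.
  have -> : U = - (r1 * c%:P%:P * (- 'X) ^+ k) * 'X by rewrite eU eg exprSr; ring.
  by rewrite coefMX.
rewrite coef_poly size_map_polyC subn_gt0 size_gt2 horner_map_polyC_X.
by move/eqP; rewrite (negPf D2f).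
Qed.

Lemma size_resultant_taylor_tails : ((size (resultant U V)).-1 <= (d - 2) * (d - 2))%N.
Proof.
have f0 : f != 0 by rewrite -size_poly_eq0 f_size.
have := lt_size_deriv f0; have := size_gt2; rewrite f_size => d2 sdf.
have sU : ((size U).-1 <= d - 2)%N.
  by have : (size U <= size f^:P - 2)%N := size_poly _ _; rewrite size_map_polyC f_size; lia.
have sV : ((size V).-1 <= d - 2)%N.
  have : (size V <= size (f^`())^:P - 1)%N := size_poly _ _; rewrite size_map_polyC.
  by set v := size V; set y := size f^`() in sdf *; lia.
have cU i : deg_atmost U`_i ((d - 2)%N%:Z - i%:Z).
  by apply: deg_atmost_trans (deg_atmost_coef_taylor_tail _ _ _); rewrite f_size; lia.
have cV i : deg_atmost V`_i ((d - 2)%N%:Z - i%:Z).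
  apply: deg_atmost_trans (deg_atmost_coef_taylor_tail _ _ _).
  by set y := size f^`() in sdf *; lia.
case: (deg_atmost_resultant cU cV sU sV) => [->|]; first by rewrite size_poly0.
by move: (size (resultant U V)) ((d - 2) * (d - 2))%N => z m; lia.
Qed.

Lemma size_exceptional_roots :
  ((size (resultant U V)).-1 + (size f^`N(2)).-1 <= d * d - 2 * d)%N.
Proof.
have := size_resultant_taylor_tails; have := size_nderivn f 2; have := size_gt2.
rewrite f_size; move: (size (resultant U V)) (size f^`N(2)) => m n; nia.
Qed.

Definition tangent_poly (s b : L) : {poly L} := fL + s *: 'X + b%:P.

Lemma horner_tangent_poly s b x : (tangent_poly s b).[x] = fL.[x] + s * x + b.
Proof. by rewrite !hornerE. Qed.

Lemma horner_deriv_tangent_poly s b x : (tangent_poly s b)^`().[x] = dfL.[x] + s.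
Proof. by rewrite !derivE deriv_map addr0 !hornerE. Qed.

Section MonicPolynomial.
Hypothesis f_monic : f \is monic.

Lemma eval_resultant_taylor_tails_eq0 (r a : L) : a != r ->
  fL.[a] = fL.[r] + dfL.[r] * (a - r) -> dfL.[a] = dfL.[r] ->
  eval_at iota r (resultant U V) = 0.
Proof.
move=> ar efL edfL; have w0 : a - r != 0 by rewrite subr_eq0.
have ea : r + (a - r) = a by rewrite addrC subrK.
have df0 : f^`() != 0 by rewrite -size_poly_gt0 ltnW.
have lead_polyC (p : {poly F}) : lead_coef p^:P = (lead_coef p)%:P.
  by rewrite lead_coef_map_inj //; exact: polyC_inj.
apply: (rmorph_resultant_common_root (w := a - r)).
- rewrite lead_coef_taylor_tail ?size_map_polyC ?size_gt2 // lead_polyC /= horner_morphC.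
  by rewrite (monicP f_monic) rmorph1 oner_neq0.
- rewrite lead_coef_taylor_tail ?size_map_polyC // lead_polyC /= horner_morphC.
  by rewrite fmorph_eq0 lead_coef_eq0.
- rewrite map_taylor_tail_polyCX; apply: taylor_tail_root w0 _ _.
    by rewrite size_map_poly ltnW ?size_gt2.
  by rewrite ea !big_ord_recl big_ord0 /= nderivn0 nderivn1 deriv_map expr0 expr1 mulr1 addr0.
- rewrite map_taylor_tail_polyCX; apply: taylor_tail_root w0 _ _.
    by rewrite size_map_poly ltnW.
  by rewrite ea big_ord1 nderivn0 expr0 mulr1.
Qed.

Lemma tangent_double_root_unique (s b r : L) :
  ~~ root (map_poly iota (resultant U V)) r ->
  (tangent_poly s b).[r] = 0 -> (tangent_poly s b)^`().[r] = 0 ->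
  forall a W, tangent_poly s b = ('X - a%:P) ^+ 2 * W -> a = r.
Proof.
move=> res_r Pr dPr a W /double_root_deriv [Pa dPa].
apply/eqP; apply: contraNT res_r => ar; apply/eqP.
move: Pr dPr Pa dPa; rewrite !horner_tangent_poly !horner_deriv_tangent_poly.
move=> Pr dPr Pa dPa; apply: (eval_resultant_taylor_tails_eq0 ar).
  have -> : fL.[a] = (fL.[a] + s * a + b) - s * a - b by ring.
  have -> : fL.[r] = (fL.[r] + s * r + b) - s * r - b by ring.
  by rewrite -[dfL.[r]](addrK s) Pa Pr dPr; ring.
by rewrite -[dfL.[a]](addrK s) dPa -[dfL.[r]](addrK s) dPr.
Qed.

Lemma tangent_factorization (s r : L) : dfL.[r] = - s ->
  ~~ root (map_poly iota (resultant U V)) r -> ~~ root (map_poly iota f^`N(2)) r ->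
  exists b rs, [/\ size rs = (d - 2)%N, uniq (r :: rs) &
    tangent_poly s b = ('X - r%:P) ^+ 2 * \prod_(a <- rs) ('X - a%:P)].
Proof.
move=> dfr res_r D2r; set b := - (fL.[r] + s * r); set P := tangent_poly s b.
have Pr : P.[r] = 0 by rewrite horner_tangent_poly /b; ring.
have dPr : P^`().[r] = 0 by rewrite horner_deriv_tangent_poly dfr addNr.
have low_lt : (size (s *: 'X + b%:P)%R < size fL)%N.
  by rewrite size_map_poly (leq_ltn_trans (size_linear_poly s b)) ?size_gt2.
have sP : size P = d.+1 by rewrite /P /tangent_poly -addrA size_polyDl // size_map_poly.
have P_monic : P \is monic.
  rewrite monicE /P /tangent_poly -addrA lead_coefDl // lead_coef_map.
  by rewrite (monicP f_monic) rmorph1.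
have D2P : (P^`N(2)).[r] != 0.
  rewrite /P /tangent_poly -addrA nderivnD (nderivn_poly0 (size_linear_poly s b)).
  by rewrite addr0 nderivn_map.
have P2 : (2 < size P)%N by rewrite sP -f_size size_gt2.
have eP := double_root_factor (ltnW P2) Pr dPr; set Q := _ \Po _ in eP.
have Qr : Q.[r] != 0 by rewrite horner_comp hornerXsubC subrr horner0_taylor_tail.
have X2_monic : ('X - r%:P) ^+ 2 \is monic by rewrite monic_exp ?monicXsubC.
have Q_monic : Q \is monic by rewrite -(monicMl _ X2_monic) -eP.
have [rs eQ] := closed_field_poly_normal Q; rewrite (monicP Q_monic) scale1r in eQ.
exists b, rs; split; last by rewrite -eQ.
- move: sP; rewrite eP size_Mmonic ?monic_neq0 // size_exp_XsubC eQ size_prod_XsubC.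
  by move=> [<-]; rewrite subn2.
- apply: uniq_double_root => [|a W e].
    by move: Qr; rewrite -[_ != 0]/(~~ root Q r) eQ root_prod_XsubC.
  by apply: (tangent_double_root_unique (W := W) res_r Pr dPr); rewrite -/P eP eQ.
Qed.

End MonicPolynomial.

End TangentLines.

Unset Implicit Arguments. Set Strict Implicit. Set Printing Implicit Defensive.

Theorem mainTheorem4 (F : finFieldType) (L : closedFieldType)
  (iota : {rmorphism F -> L})
  (L_alg : forall z : L, exists p : {poly F}, p != 0 /\ root (map_poly iota p) z)
  (d : nat) (f : {poly F})
  (f_monic : f \is monic) (f_deg : size f = d.+1)
  (hD2 : f^`N(2) != 0)
  (hdf : (1 < size f^`())%N)
  (hcop : only_xmy_common (divdiff f - (f^`())%:P) (divdiff f^`())) :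
  exists S : seq L, (size S <= d * d - 2 * d)%N /\
    forall s : L, s \notin S ->
      exists b : L, exists r : L, exists rs : seq L,
        [/\ size rs = (d - 2)%N, uniq (r :: rs) &
          map_poly iota f + s *: 'X + b%:P
            = ('X - r%:P) ^+ 2 * \prod_(a <- rs) ('X - a%:P)].
Proof.
have hR := resultant_taylor_tails_neq0 iota hdf hD2 hcop.
have [rs1 [size_rs1 rs1P]] := roots_in_seq iota hR.
have [rs2 [size_rs2 rs2P]] := roots_in_seq iota hD2.
exists [seq - (map_poly iota f^`()).[x] | x <- rs1 ++ rs2]; split.
  by rewrite size_map size_cat size_rs1 size_rs2; exact: size_exceptional_roots f_deg hdf.
move=> s sS; have [r dfr] : exists r, (map_poly iota f^`()).[r] = - s.
  by apply: closed_field_poly_surj; rewrite size_map_poly.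
have [r_res r_D2] : r \notin rs1 /\ r \notin rs2.
  apply/andP; rewrite -negb_or -mem_cat; apply: contra sS => rrs.
  by apply/mapP; exists r; rewrite ?dfr ?opprK.
have [b [rs [? ? eP]]] :=
  tangent_factorization f_deg hdf f_monic dfr (contra (rs1P r) r_res) (contra (rs2P r) r_D2).
by exists b, r, rs.
Qed.
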